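(* Let $\gamma_i\in\mathcal{M}_k\otimes\mathcal{M}_k$, $i=1,\dots,n$, be states whose images are not contained in the anti-symmetric subspace of $\mathbb{C}^k\otimes\mathbb{C}^k$. Then: (a) $\gamma_1^\Gamma\otimes\cdots\otimes\gamma_n^\Gamma\ge0$ if and only if $\gamma_i^\Gamma\ge0$ for all $i$; (b) $\mathcal{R}(\gamma_1^\Gamma)\otimes\cdots\otimes\mathcal{R}(\gamma_n^\Gamma)\ge0$ if and only if $\mathcal{R}(\gamma_i^\Gamma)\ge0$ for all $i$; (c) $\mathcal{R}(\gamma_1)\otimes\cdots\otimes\mathcal{R}(\gamma_n)=\gamma_1\otimes\cdots\otimes\gamma_n$ if and only if $\mathcal{R}(\gamma_i)=\gamma_i$ for all $i$.
   Context: $\mathcal{M}_k$ denotes complex $k\times k$ matrices; $\mathcal{M}_k\otimes\mathcal{M}_k\cong\mathcal{M}_{k^2}$ via the Kronecker product. A state is a positive semidefinite Hermitian matrix (not necessarily of trace one). The anti-symmetric subspace of $\mathbb{C}^k\otimes\mathbb{C}^k$ is $\{x: F_kx=-x\}$, where $F_k(v\otimes w)=w\otimes v$ is the flip operator. Partial transpose: $(\sum_iA_i\otimes B_i)^\Gamma=\sum_iA_i\otimes B_i^t$. Realignment on $\mathcal{M}_k\otimes\mathcal{M}_k$: identify $\mathcal{M}_k$ with $\mathbb{C}^k\otimes\mathbb{C}^k$ via $\mathrm{vec}(vw^t)=v\otimes w$ (extended linearly), and set $\mathcal{R}(A\otimes B)=\mathrm{vec}(A)\mathrm{vec}(B)^t$,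 extended linearly. *)

From HB Require Import structures.
From mathcomp Require Import all_boot all_order all_algebra.
Set Implicit Arguments. Unset Strict Implicit. Unset Printing Implicit Defensive.
Import Order.TTheory GRing.Theory Num.Theory Num.Def.
Local Open Scope ring_scope.

Section QInfo.
Context {C : numClosedFieldType}.

(* Splitting an index of 'I_(m*n) into a pair; inverse of mxvec_index. *)
Definition idx_split m n (p : 'I_(m * n)) : 'I_m * 'I_n :=
  enum_val (cast_ord (esym (mxvec_cast m n)) p).

(* Kronecker product, with C^m (x) C^n identified with C^(m*n) via mxvec_index *)
Definition kron m1 n1 m2 n2 (A : 'M[C]_(m1, n1)) (B : 'M[C]_(m2, n2))
  : 'M[C]_(m1 * m2, n1 * n2) :=
  \matrix_(p, q) (A (idx_split p).1 (idx_split q).1 * B (idx_split p).2 (idx_split q).2).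

Fixpoint kronn d (n : nat) (g : nat -> 'M[C]_d) : 'M[C]_(d ^ n) :=
  match n return 'M[C]_(d ^ n) with
  | 0 => 1%:M
  | n'.+1 => castmx (esym (expnS d n'), esym (expnS d n'))
               (kron (g 0%N) (kronn n' (fun i => g i.+1)))
  end.

Definition adjmx m n (A : 'M[C]_(m, n)) : 'M[C]_(n, m) := (map_mx conjC A)^T.

(* state = positive semidefinite Hermitian matrix (trace not normalized) *)
Definition psd n (A : 'M[C]_n) : Prop :=
  adjmx A = A /\ forall x : 'cV[C]_n, 0 <= (adjmx x *m A *m x) 0 0.

(* partial transpose on the second factor of M_k (x) M_k *)
Definition ptrans k (X : 'M[C]_(k * k)) : 'M[C]_(k * k) :=
  \matrix_(p, q) X (mxvec_index (idx_split p).1 (idx_split q).2)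
                   (mxvec_index (idx_split q).1 (idx_split p).2).

(* realignment: R(A (x) B) = vec(A) vec(B)^t, vec(v w^t) = v (x) w *)
Definition realign k (X : 'M[C]_(k * k)) : 'M[C]_(k * k) :=
  \matrix_(p, q) X (mxvec_index (idx_split p).1 (idx_split q).1)
                   (mxvec_index (idx_split p).2 (idx_split q).2).

Definition flip k (x : 'cV[C]_(k * k)) : 'cV[C]_(k * k) :=
  \col_p x (mxvec_index (idx_split p).2 (idx_split p).1) 0.

Definition antisym k (x : 'cV[C]_(k * k)) : Prop := flip x = - x.

Definition range_in_antisym k (X : 'M[C]_(k * k)) : Prop :=
  forall x : 'cV[C]_(k * k), antisym (X *m x).

End QInfo.

From HB Require Import structures.
From mathcomp Require Import all_boot all_order all_algebra.
From mathcomp Require Import ring.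
Set Implicit Arguments. Unset Strict Implicit. Unset Printing Implicit Defensive.
Import Order.TTheory GRing.Theory Num.Theory Num.Def.
Local Open Scope ring_scope.

(* Everything is tested through the bilinear pairing
   frob W A = sum_(p,q) W_pq A_pq, which is multiplicative on Kronecker
   products and turns the quadratic form x^* A x into frob (x^* x^T) A.
   (a), (b): pairing a positive semidefinite Kronecker product with
   x^* x^T (x) y_2^* y_2^T (x) ..., where each y_j makes the j-th quadratic
   form positive, shows that the first factor is positive semidefinite;
   conversely a Kronecker product of Gram matrices L^* L is a Gram matrix.
   Such y_j exist because gamma^Gamma has the diagonal of gamma and
   R(gamma^Gamma) has the entry gamma_(ab,ab) at ((aa),(bb)).
   (c): with Omega = sum_a e_a (x) e_a, the functional
   A |-> frob (1 + Omega^* Omega^T) A = tr A + Omega^* A Omega is invariant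
   under realignment, which swaps the two summands, and positive on nonzero
   states; pairing with a matrix unit in one factor and 1 + Omega^* Omega^T
   in all others isolates that factor. *)

Section KronPositivity.
Context {C : numClosedFieldType}.

Lemma idx_splitK m n (a : 'I_m) (b : 'I_n) : idx_split (mxvec_index a b) = (a, b).
Proof. by rewrite /idx_split /mxvec_index cast_ordK enum_rankK. Qed.

Lemma sum_mxvec_index m n (F : 'I_(m * n) -> C) :
  \sum_p F p = \sum_a \sum_b F (mxvec_index a b).
Proof.
rewrite pair_bigA (reindex (uncurry (@mxvec_index m n))) /=; last exact: curry_mxvec_bij.
by apply: eq_bigr => -[a b].
Qed.

Lemma kronE m1 n1 m2 n2 (A : 'M[C]_(m1, n1)) (B : 'M[C]_(m2, n2)) a b c d :
  kron A B (mxvec_index a b) (mxvec_index c d) = A a c * B b d.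
Proof. by rewrite mxE !idx_splitK. Qed.

Lemma mulmx_kron m1 n1 p1 m2 n2 p2 (A : 'M[C]_(m1, n1)) (B : 'M[C]_(m2, n2))
    (A' : 'M[C]_(n1, p1)) (B' : 'M[C]_(n2, p2)) :
  kron A B *m kron A' B' = kron (A *m A') (B *m B').
Proof.
apply/matrixP => p q; case/mxvec_indexP: p => a b; case/mxvec_indexP: q => c d.
rewrite kronE !mxE sum_mxvec_index big_distrl /=; apply: eq_bigr => i _.
by rewrite big_distrr /=; apply: eq_bigr => j _; rewrite !kronE mulrACA.
Qed.

Lemma eq_kronn d n (g g' : nat -> 'M[C]_d) :
  (forall i, (i < n)%N -> g i = g' i) -> kronn n g = kronn n g'.
Proof.
elim: n g g' => [|n IH] g g' eq_g //=.
by rewrite (eq_g 0%N isT) (IH (fun i => g i.+1) (fun i => g' i.+1)) // => i lt_in; apply: eq_g.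
Qed.

Lemma adjmxK m n (A : 'M[C]_(m, n)) : adjmx (adjmx A) = A.
Proof. by apply/matrixP => i j; rewrite !mxE conjCK. Qed.

Lemma adjmx1 n : adjmx (1%:M : 'M[C]_n) = 1%:M.
Proof. by rewrite /adjmx map_mx1 trmx1. Qed.

Lemma adjmxD m n (A B : 'M[C]_(m, n)) : adjmx (A + B) = adjmx A + adjmx B.
Proof. by rewrite /adjmx map_mxD linearD. Qed.

Lemma adjmxZ m n c (A : 'M[C]_(m, n)) : adjmx (c *: A) = c^* *: adjmx A.
Proof. by rewrite /adjmx map_mxZ linearZ. Qed.

Lemma adjmxM m n p (A : 'M[C]_(m, n)) (B : 'M[C]_(n, p)) :
  adjmx (A *m B) = adjmx B *m adjmx A.
Proof. by rewrite /adjmx map_mxM trmx_mul. Qed.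

Lemma adjmx_kron m1 n1 m2 n2 (A : 'M[C]_(m1, n1)) (B : 'M[C]_(m2, n2)) :
  adjmx (kron A B) = kron (adjmx A) (adjmx B).
Proof.
apply/matrixP => p q; case/mxvec_indexP: p => a b; case/mxvec_indexP: q => c d.
by rewrite kronE !mxE !idx_splitK rmorphM.
Qed.

Definition frob m n (W A : 'M[C]_(m, n)) : C := \sum_p \sum_q W p q * A p q.

Lemma frobDl m n (W1 W2 A : 'M[C]_(m, n)) : frob (W1 + W2) A = frob W1 A + frob W2 A.
Proof.
rewrite /frob -big_split /=; apply: eq_bigr => p _.
by rewrite -big_split /=; apply: eq_bigr => q _; rewrite mxE mulrDl.
Qed.

Lemma frob1l n (A : 'M[C]_n) : frob 1%:M A = \sum_p A p p.
Proof.
apply: eq_bigr => p _; rewrite (bigD1 p) //= big1 => [|q /negbTE q_p].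
  by rewrite mxE eqxx mul1r addr0.
by rewrite mxE eq_sym q_p mul0r.
Qed.

Lemma frob_deltal m n (A : 'M[C]_(m, n)) p q : frob (delta_mx p q) A = A p q.
Proof.
rewrite /frob (bigD1 p) //= [X in _ + X]big1 => [|i /negbTE i_p]; last first.
  by apply: big1 => j _; rewrite mxE i_p mul0r.
rewrite (bigD1 q) //= big1 => [|j /negbTE j_q]; last by rewrite mxE eqxx j_q mul0r.
by rewrite mxE !eqxx mul1r !addr0.
Qed.

Lemma frob_kron m1 n1 m2 n2 (W A : 'M[C]_(m1, n1)) (V B : 'M[C]_(m2, n2)) :
  frob (kron W V) (kron A B) = frob W A * frob V B.
Proof.
rewrite /frob sum_mxvec_index big_distrl /=; apply: eq_bigr => a _.
rewrite big_distrl /=; under eq_bigr do rewrite sum_mxvec_index.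
rewrite exchange_big /=; apply: eq_bigr => c _.
rewrite big_distrr /=; apply: eq_bigr => b _.
by rewrite big_distrr /=; apply: eq_bigr => d _; rewrite !kronE mulrACA.
Qed.

Lemma frob_castmx m m' (e : m = m') (W A : 'M[C]_m) :
  frob (castmx (e, e) W) (castmx (e, e) A) = frob W A.
Proof. by case: m' / e; rewrite !castmx_id. Qed.

Lemma frob_kronn d n (W A : nat -> 'M[C]_d) :
  frob (kronn n W) (kronn n A) = \prod_(i < n) frob (W i) (A i).
Proof.
elim: n W A => [|n IH] W A /=; last by rewrite frob_castmx frob_kron IH big_ord_recl.
rewrite big_ord0 frob1l (eq_bigr (fun _ => 1)) => [|p _]; last by rewrite mxE eqxx.
by rewrite sumr_const card_ord expn0.
Qed.

Definition qform n (A : 'M[C]_n) (x : 'cV[C]_n) : C := (adjmx x *m A *m x) 0 0.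

Definition outermx n (x : 'cV[C]_n) : 'M[C]_n := \matrix_(i, j) ((x i 0)^* * x j 0).

Definition kronv m n (x : 'cV[C]_m) (y : 'cV[C]_n) : 'cV[C]_(m * n) :=
  \col_p (x (idx_split p).1 0 * y (idx_split p).2 0).

Lemma qform_frob n (A : 'M[C]_n) x : qform A x = frob (outermx x) A.
Proof.
rewrite /qform /frob mxE exchange_big /=; apply: eq_bigr => j _.
by rewrite mxE big_distrl /=; apply: eq_bigr => i _; rewrite !mxE mulrAC.
Qed.

Lemma kron_outermx m n (x : 'cV[C]_m) (y : 'cV[C]_n) :
  kron (outermx x) (outermx y) = outermx (kronv x y).
Proof.
apply/matrixP => p q; case/mxvec_indexP: p => a b; case/mxvec_indexP: q => c d.
by rewrite kronE !mxE !idx_splitK rmorphM mulrACA.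
Qed.

Lemma castmx_outermx m m' (e : m = m') (x : 'cV[C]_m) :
  castmx (e, e) (outermx x) = outermx (castmx (e, erefl 1%N) x).
Proof. by case: m' / e; rewrite !castmx_id. Qed.

Lemma kronn_outermx d n (x : nat -> 'cV[C]_d) :
  exists z, kronn n (fun i => outermx (x i)) = outermx z.
Proof.
elim: n x => [|n IH] x /=.
  exists (\col_i 1); apply/matrixP => i j; rewrite !mxE conjC1 mulr1.
  suff -> : i = j by rewrite eqxx.
  have lt1 (l : 'I_(d ^ 0)) : (l < 1)%N by rewrite -(expn0 d).
  by apply: ord_inj; move: (lt1 i) (lt1 j); rewrite !ltnS !leqn0 => /eqP-> /eqP->.
have [z ->] := IH (fun i => x i.+1).
by rewrite kron_outermx castmx_outermx; eexists.
Qed.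

Lemma kronn_psd_qform_prod d n (B : nat -> 'M[C]_d) (x : nat -> 'cV[C]_d) :
  psd (kronn n B) -> 0 <= \prod_(i < n) qform (B i) (x i).
Proof.
case=> _ B_ge0; have [z Ez] := kronn_outermx n x.
have := B_ge0 z; rewrite -/(qform _ z) qform_frob -Ez frob_kronn.
by under eq_bigr do rewrite -qform_frob.
Qed.

Definition basisv n (p : 'I_n) : 'cV[C]_n := delta_mx p 0.

Lemma adjmx_basisv_mul n (A : 'M[C]_n) p q : adjmx (basisv p) *m A *m basisv q = (A p q)%:M.
Proof.
rewrite /adjmx /basisv map_delta_mx trmx_delta -rowE -colE.
by apply/matrixP => i j; rewrite !ord1 !mxE eqxx mulr1n.
Qed.

Lemma qform_basisvD n (A : 'M[C]_n) p q c :
  qform A (basisv p + c *: basisv q) =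
  A p p + c * A p q + c^* * A q p + c^* * c * A q q.
Proof.
rewrite /qform adjmxD adjmxZ !mulmxDl !mulmxDr -!scalemxAl -!scalemxAr.
by rewrite !adjmx_basisv_mul !mxE !eqxx !mulr1n; ring.
Qed.

Lemma qform_basisv n (A : 'M[C]_n) p : qform A (basisv p) = A p p.
Proof. by rewrite /qform adjmx_basisv_mul mxE eqxx mulr1n. Qed.

(* Positivity of the quadratic form already forces A to be Hermitian: the
   real parts of the forms at e_i + e_j and e_i + 'i e_j give A_ji = A_ij^*. *)
Lemma qform_ge0_psd n (A : 'M[C]_n) : (forall x, 0 <= qform A x) -> psd A.
Proof.
move=> A_ge0; split => //; apply/matrixP => i j; rewrite !mxE.
have diag_real p : (A p p)^* = A p p by rewrite geC0_conj // -qform_basisv.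
have E1 := geC0_conj (A_ge0 (basisv i + 1 *: basisv j)).
have Ei := geC0_conj (A_ge0 (basisv i + 'i *: basisv j)).
rewrite !qform_basisvD !rmorphD !rmorphM /= !conjCK conjC1 conjCi !diag_real in E1 Ei.
set a := A i j in E1 Ei *; set b := A j i in E1 Ei *.
move/eqP: E1; rewrite -subr_eq0 => /eqP E1; move/eqP: Ei; rewrite -subr_eq0 => /eqP Ei.
have : (b^* - a) * 2 = 0.
  have -> : (b^* - a) * 2 =
      (A i i + 1 * a^* + 1 * b^* + 1 * 1 * A j j - (A i i + 1 * a + 1 * b + 1 * 1 * A j j))
    - 'i * (A i i + - 'i * a^* + 'i * b^* + 'i * - 'i * A j j
            - (A i i + 'i * a + - 'i * b + - 'i * 'i * A j j))
    - (1 + 'i ^+ 2) * (a^* - b^* + a - b) by ring.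
  by rewrite E1 Ei sqrCi addrN mulr0 mul0r !subr0.
by move/eqP; rewrite mulf_eq0 pnatr_eq0 orbF subr_eq0 => /eqP.
Qed.

Lemma psd_diag_ge0 n (A : 'M[C]_n) p : psd A -> 0 <= A p p.
Proof. by case=> _ A_ge0; rewrite -qform_basisv; apply: A_ge0. Qed.

Lemma psd_entry_conj n (A : 'M[C]_n) p q : psd A -> A q p = (A p q)^*.
Proof. by case=> A_herm _; rewrite -{1}A_herm !mxE. Qed.

(* Test against e_p - A_pq^* e_q. *)
Lemma psd_diag0_eq0 n (A : 'M[C]_n) : psd A -> (forall p, A p p = 0) -> A = 0.
Proof.
move=> A_psd diag0; apply/matrixP => p q; rewrite mxE.
have : 0 <= qform A (basisv p + - (A p q)^* *: basisv q) by case: A_psd => _; apply.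
rewrite qform_basisvD !diag0 (psd_entry_conj p q A_psd) !raddfN /= !conjCK.
set a := A p q.
have -> : 0 + - a^* * a + - a * a^* + - a * - a^* * 0 = - (a * a^*) *+ 2.
  by rewrite mulr2n; ring.
rewrite pmulrn_lge0 // oppr_ge0 => a_le0.
by apply/eqP; rewrite -mul_conjC_eq0 eq_le a_le0 mul_conjC_ge0.
Qed.

Lemma psd_neq0_diag_gt0 n (A : 'M[C]_n) : psd A -> A <> 0 -> exists p, 0 < A p p.
Proof.
move=> A_psd A_neq0; case: (pickP (fun p => 0 < A p p)) => [p|A_le0]; first by exists p.
case: A_neq0; apply: psd_diag0_eq0 => // p.
by have := A_le0 p; rewrite lt_def psd_diag_ge0 // andbT => /negbFE/eqP.
Qed.

Lemma kronn_psd_factor d n (B : nat -> 'M[C]_d) :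
  (forall i, (i < n)%N -> exists y, 0 < qform (B i) y) ->
  psd (kronn n B) -> forall i, (i < n)%N -> psd (B i).
Proof.
move=> B_pos B_psd i0 lt_i0n; apply: qform_ge0_psd => x.
have y_ex j : exists y, (j < n)%N ==> (0 < qform (B j) y).
  by case: (ltnP j n) => [/B_pos[y y_pos]|]; [exists y; rewrite y_pos | exists 0].
pose z j := if j == i0 then x else xchoose (y_ex j).
have := kronn_psd_qform_prod z B_psd.
rewrite (bigD1 (Ordinal lt_i0n)) //= /z eqxx pmulr_lge0 //.
apply: prodr_gt0 => j; rewrite -(inj_eq val_inj) /= => /negbTE ->.
exact: implyP (xchooseP (y_ex j)) (ltn_ord j).
Qed.

Lemma gram_psd n (L : 'M[C]_n) : psd (adjmx L *m L).
Proof.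
split; first by rewrite adjmxM adjmxK.
move=> x; rewrite !mulmxA -adjmxM -mulmxA mxE.
by apply: sumr_ge0 => i _; rewrite !mxE mulrC mul_conjC_ge0.
Qed.

(* Spectral theorem: A = P^* D P with P unitary and D >= 0, so L = sqrt(D) P. *)
Lemma psd_gram n (A : 'M[C]_n) : psd A -> exists L : 'M[C]_n, A = adjmx L *m L.
Proof.
case=> A_herm A_ge0.
have A_normal : A \is normalmx.
  have A_adj : map_mx conjC A^T = A by rewrite -map_trmx; apply: A_herm.
  by apply/normalmxP; rewrite A_adj.
have /orthomx_spectralP EA := A_normal.
set P := spectralmx A in EA; set D := spectral_diag A in EA.
have adjP : adjmx P = map_mx conjC (P^T) by rewrite /adjmx map_trmx.
have PP' : P *m adjmx P = 1%:M by rewrite adjP; apply/unitarymxP/spectral_unitarymx.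
rewrite invmx_unitary ?spectral_unitarymx // -adjP in EA.
have D_ge0 i : 0 <= D 0 i.
  have := A_ge0 (adjmx P *m basisv i).
  rewrite adjmxM adjmxK EA !mulmxA -(mulmxA _ P) PP' mulmx1 -(mulmxA _ P) PP' mulmx1.
  by rewrite adjmx_basisv_mul !mxE eqxx mulr1n.
pose S := diag_mx (\row_j sqrtC (D 0 j)).
have adjS : adjmx S = S.
  apply/matrixP => i j; rewrite !mxE rmorphMn.
  case: (eqVneq i j) => [->|_]; last by rewrite !mulr0n.
  by rewrite !mulr1n; apply: geC0_conj; rewrite sqrtC_ge0.
exists (S *m P); rewrite adjmxM adjS mulmxA -(mulmxA (adjmx P)) mulmx_diag {1}EA.
by congr (_ *m diag_mx _ *m _); apply/rowP => j; rewrite !mxE -expr2 sqrtCK.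
Qed.

Lemma castmx_gram m m' (e : m = m') (L : 'M[C]_m) :
  castmx (e, e) (adjmx L *m L) = adjmx (castmx (e, e) L) *m castmx (e, e) L.
Proof. by case: m' / e; rewrite !castmx_id. Qed.

Lemma kronn_gram d n (B : nat -> 'M[C]_d) :
  (forall i, (i < n)%N -> exists L : 'M[C]_d, B i = adjmx L *m L) ->
  exists Z : 'M[C]_(d ^ n), kronn n B = adjmx Z *m Z.
Proof.
elim: n B => [|n IH] B B_gram /=; first by exists 1%:M; rewrite adjmx1 mulmx1.
have [L ->] := B_gram 0%N isT.
have [Z ->] := IH (fun i => B i.+1) (fun i => B_gram i.+1).
by rewrite -mulmx_kron -adjmx_kron castmx_gram; eexists.
Qed.

Lemma kronn_psd d n (B : nat -> 'M[C]_d) :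
  (forall i, (i < n)%N -> psd (B i)) -> psd (kronn n B).
Proof.
move=> B_psd; have [Z ->] := kronn_gram (fun i lt_in => psd_gram (B_psd i lt_in)).
exact: gram_psd.
Qed.

Lemma kronn_psdE d n (B : nat -> 'M[C]_d) :
  (forall i, (i < n)%N -> exists y, 0 < qform (B i) y) ->
  psd (kronn n B) <-> (forall i, (i < n)%N -> psd (B i)).
Proof. by move=> B_pos; split; [apply: kronn_psd_factor | apply: kronn_psd]. Qed.

Lemma kronn_eq_factor d n (g h : nat -> 'M[C]_d) (W : 'M[C]_d) :
  (forall i, (i < n)%N -> frob W (h i) = frob W (g i) /\ frob W (g i) != 0) ->
  kronn n h = kronn n g -> forall i, (i < n)%N -> h i = g i.
Proof.
move=> W_gh eq_hg i lt_in; apply/matrixP => p q.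
pose i' := Ordinal lt_in.
pose V j := if j == i then delta_mx p q else W.
have V_i : V i = delta_mx p q by rewrite /V eqxx.
have V_other (j : 'I_n) : j != i' -> V j = W.
  by rewrite -(inj_eq val_inj) /V => /negbTE ->.
have := congr1 (frob (kronn n V)) eq_hg.
rewrite !frob_kronn (bigD1 i') // [RHS](bigD1 i') //= V_i !frob_deltal.
have others_eq : \prod_(j < n | j != i') frob (V j) (h j) =
                 \prod_(j < n | j != i') frob (V j) (g j).
  by apply: eq_bigr => j /V_other ->; apply: (W_gh j (ltn_ord j)).1.
have others_neq0 : \prod_(j < n | j != i') frob (V j) (g j) != 0.
  by apply/prodf_neq0 => j /V_other ->; apply: (W_gh j (ltn_ord j)).2.
by rewrite others_eq; apply: mulIf.
Qed.

Lemma ptransE k (X : 'M[C]_(k * k)) a b c d :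
  ptrans X (mxvec_index a b) (mxvec_index c d) = X (mxvec_index a d) (mxvec_index c b).
Proof. by rewrite mxE !idx_splitK. Qed.

Lemma realignE k (X : 'M[C]_(k * k)) a b c d :
  realign X (mxvec_index a b) (mxvec_index c d) = X (mxvec_index a c) (mxvec_index b d).
Proof. by rewrite mxE !idx_splitK. Qed.

Lemma not_range_in_antisym_neq0 k (X : 'M[C]_(k * k)) : ~ range_in_antisym X -> X <> 0.
Proof.
move=> X_notin X0; apply: X_notin => x; rewrite X0 mul0mx /antisym oppr0.
by apply/colP => p; rewrite !mxE.
Qed.

Lemma ptrans_qform_gt0 k (X : 'M[C]_(k * k)) :
  psd X -> X <> 0 -> exists y, 0 < qform (ptrans X) y.
Proof.
move=> X_psd /(psd_neq0_diag_gt0 X_psd)[p]; case/mxvec_indexP: p => a b X_pos.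
by exists (basisv (mxvec_index a b)); rewrite qform_basisv ptransE.
Qed.

Lemma realign_ptrans_qform_gt0 k (X : 'M[C]_(k * k)) :
  psd X -> X <> 0 -> exists y, 0 < qform (realign (ptrans X)) y.
Proof.
move=> X_psd /(psd_neq0_diag_gt0 X_psd)[p]; case/mxvec_indexP: p => a b X_pos.
exists (basisv (mxvec_index a a) + 1 *: basisv (mxvec_index b b)).
rewrite qform_basisvD !realignE !ptransE conjC1 !mul1r.
have X_diag p : 0 <= X p p := psd_diag_ge0 p X_psd.
exact: ltr_wpDr (X_diag _) (ltr_wpDr (X_diag _) (ltr_pwDr X_pos (X_diag _))).
Qed.

Definition Omega k : 'cV[C]_(k * k) := \col_p ((idx_split p).1 == (idx_split p).2)%:R.

Definition realign_test k : 'M[C]_(k * k) := 1%:M + outermx (Omega k).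

Lemma frob_outermx_Omega k (A : 'M[C]_(k * k)) :
  frob (outermx (Omega k)) A = \sum_a \sum_c A (mxvec_index a a) (mxvec_index c c).
Proof.
rewrite /frob sum_mxvec_index; apply: eq_bigr => a _.
rewrite (bigD1 a) //= [X in _ + X]big1 ?addr0 => [|b b_a]; last first.
  by apply: big1 => q _; rewrite !mxE idx_splitK /= eq_sym (negbTE b_a) rmorph0 !mul0r.
rewrite sum_mxvec_index; apply: eq_bigr => c _.
rewrite (bigD1 c) //= big1 => [|d d_c].
  by rewrite !mxE !idx_splitK /= !eqxx rmorph1 !mul1r addr0.
by rewrite !mxE !idx_splitK /= eq_sym (negbTE d_c) mulr0 mul0r.
Qed.

Lemma frob_realign_test_realign k (A : 'M[C]_(k * k)) :
  frob (realign_test k) (realign A) = frob (realign_test k) A.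
Proof.
rewrite !frobDl !frob_outermx_Omega !frob1l addrC !sum_mxvec_index.
by congr (_ + _); apply: eq_bigr => a _; apply: eq_bigr => c _; rewrite realignE.
Qed.

Lemma frob_realign_test_gt0 k (A : 'M[C]_(k * k)) :
  psd A -> A <> 0 -> 0 < frob (realign_test k) A.
Proof.
move=> A_psd /(psd_neq0_diag_gt0 A_psd)[p A_pos].
rewrite frobDl -qform_frob frob1l ltr_wpDr //; first by case: A_psd => _; apply.
by rewrite (bigD1 p) //= ltr_wpDr // sumr_ge0 // => q _; apply: psd_diag_ge0.
Qed.

End KronPositivity.

Theorem mainTheorem15 (C : numClosedFieldType) (k n : nat)
    (gamma : nat -> 'M[C]_(k * k)) :
  (forall i, (i < n)%N -> psd (gamma i) /\ ~ range_in_antisym (gamma i)) ->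
  [/\ (psd (kronn n (fun i => ptrans (gamma i))) <->
         (forall i, (i < n)%N -> psd (ptrans (gamma i)))),
      (psd (kronn n (fun i => realign (ptrans (gamma i)))) <->
         (forall i, (i < n)%N -> psd (realign (ptrans (gamma i)))))
    & (kronn n (fun i => realign (gamma i)) = kronn n gamma <->
         (forall i, (i < n)%N -> realign (gamma i) = gamma i))].
Proof.
move=> gamma_state.
have gamma_psd i : (i < n)%N -> psd (gamma i) by case/gamma_state.
have gamma_neq0 i : (i < n)%N -> gamma i <> 0.
  by case/gamma_state => _; apply: not_range_in_antisym_neq0.
split.
- apply: kronn_psdE => i lt_in.
  exact: ptrans_qform_gt0 (gamma_psd i lt_in) (gamma_neq0 i lt_in).
- apply: kronn_psdE => i lt_in.
  exact: realign_ptrans_qform_gt0 (gamma_psd i lt_in) (gamma_neq0 i lt_in).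
split=> [|realign_fixed]; last exact: eq_kronn realign_fixed.
apply: (kronn_eq_factor (W := realign_test k)) => i lt_in.
rewrite frob_realign_test_realign lt0r_neq0 //.
exact: frob_realign_test_gt0 (gamma_psd i lt_in) (gamma_neq0 i lt_in).
Qed.
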